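(* Let $f:\mathbb R^n\to\mathbb R$ be a metric function. Then every gradient line of $f$ (i.e. every non-stationary trajectory of $\dot x=\operatorname{grad} f(x)$) has curvature identically zero; that is, it lies on a straight line.
   Context: A metric function on a manifold $M$ is a function $f\in C^2(M,\mathbb R)$ such that the length of its gradient $|\operatorname{grad} f|$ is constant on each connected component of each level set of $f$. A gradient line of $f$ is a trajectory of the system $\dot x=\operatorname{grad}f(x)$. *)

From Stdlib Require Import Reals.
From mathcomp Require Import ssreflect ssrfun ssrbool eqtype ssrnat fintype bigop.
Open Scope R_scope.

Definition vec (n : nat) := 'I_n -> R.

Definition vadd {n} (x y : vec n) : vec n := fun i => x i + y i.
Definition vsub {n} (x y : vec n) : vec n := fun i => x i - y i.
Definition dot {n} (x y : vec n) : R := \big[Rplus/0]_(i < n) (x i * y i).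
Definition vnorm {n} (x : vec n) : R := sqrt (dot x x).

Definition has_grad {n} (f : vec n -> R) (g : vec n) (x : vec n) : Prop :=
  forall eps, 0 < eps -> exists delta, 0 < delta /\
    forall h : vec n, vnorm h < delta ->
      Rabs (f (vadd x h) - f x - dot g h) <= eps * vnorm h.

Definition vcontinuous {n} (F : vec n -> vec n) : Prop :=
  forall x eps, 0 < eps -> exists delta, 0 < delta /\
    forall y, vnorm (vsub y x) < delta -> vnorm (vsub (F y) (F x)) < eps.

Definition C1_with_grad {n} (f : vec n -> R) (G : vec n -> vec n) : Prop :=
  (forall x, has_grad f (G x) x) /\ vcontinuous G.

Definition C2_with_grad {n} (f : vec n -> R) (G : vec n -> vec n) : Prop :=
  (forall x, has_grad f (G x) x) /\
  (forall i : 'I_n, exists H : vec n -> vec n, C1_with_grad (fun x => G x i) H).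

Definition vopen {n} (U : vec n -> Prop) : Prop :=
  forall x, U x -> exists r, 0 < r /\ forall y, vnorm (vsub y x) < r -> U y.

Definition vconnected {n} (C : vec n -> Prop) : Prop :=
  ~ exists U V : vec n -> Prop,
      vopen U /\ vopen V /\
      (forall x, C x -> U x \/ V x) /\
      (forall x, C x -> U x -> V x -> False) /\
      (exists x, C x /\ U x) /\ (exists x, C x /\ V x).

Definition same_component {n} (S : vec n -> Prop) (x y : vec n) : Prop :=
  exists C : vec n -> Prop, vconnected C /\ (forall z, C z -> S z) /\ C x /\ C y.

Definition metric_function {n} (f : vec n -> R) (G : vec n -> vec n) : Prop :=
  C2_with_grad f G /\
  forall x y, same_component (fun z => f z = f x) x y -> vnorm (G x) = vnorm (G y).

(* Open interval (lo, hi) with possibly infinite endpoints (None). *)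
Definition in_interval (lo hi : option R) (t : R) : Prop :=
  match lo with Some a => a < t | None => True end /\
  match hi with Some b => t < b | None => True end.

Definition nonempty_interval (lo hi : option R) : Prop :=
  match lo, hi with Some a, Some b => a < b | _, _ => True end.

Definition is_gradient_line {n} (G : vec n -> vec n) (lo hi : option R)
  (gamma : R -> vec n) : Prop :=
  forall t, in_interval lo hi t ->
    forall i : 'I_n, derivable_pt_lim (fun s => gamma s i) t (G (gamma t) i).

From HB Require Import structures.
From Stdlib Require Import Reals Lra Classical ClassicalEpsilon FunctionalExtensionality.
From mathcomp Require Import ssreflect ssrfun ssrbool eqtype ssrnat seq fintype bigop.
Open Scope R_scope.
Set Implicit Arguments.
Unset Strict Implicit.

(* Write G = grad f and H for the Hessian (row i of H is the gradient [Hs i]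
   of the i-th partial derivative).  The argument has two steps.
   1. G is an eigenvector of H at every point: H G = mu G.  Through a regular
      point x and in any direction w orthogonal to G(x), an implicit-function
      argument produces a level curve of f leaving x with velocity w; the level
      set is connected along it, so |G|^2 is constant on it, and differentiating
      gives G^T H w = 0.  Symmetry of H (Schwarz) then forces H G || G.
   2. Along a gradient line gamma, u(t) = G(gamma t) satisfies u' = H u = mu u
      with mu locally bounded, so by Gronwall u keeps the direction of
      v = u(t0).  Hence gamma' = u is always parallel to v, and gamma lies on
      the line through gamma(t0) with direction v. *)

(* Real addition is a commutative monoid, so the generic bigop lemmas apply
   to the finite sums \big[Rplus/0] in terms of which [dot] is defined. *)
HB.instance Definition _ :=
  Monoid.isComLaw.Build R 0 Rplus (fun a b c => esym (Rplus_assoc a b c)) Rplus_comm Rplus_0_l.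

Lemma rsum_le n (F1 F2 : 'I_n -> R) : (forall i, F1 i <= F2 i) ->
  \big[Rplus/0]_(i < n) F1 i <= \big[Rplus/0]_(i < n) F2 i.
Proof. move=> H; apply: (big_ind2 Rle) => //; [lra | move=> *; lra]. Qed.

Lemma rsum_scal n c (F : 'I_n -> R) :
  \big[Rplus/0]_(i < n) (c * F i) = c * \big[Rplus/0]_(i < n) F i.
Proof.
apply: (big_ind2 (fun a b => a = c * b)); [ring | move=> ? ? ? ? -> ->; ring | by []].
Qed.

Lemma rsum_sub n (F1 F2 : 'I_n -> R) :
  \big[Rplus/0]_(i < n) (F1 i - F2 i) =
  \big[Rplus/0]_(i < n) F1 i - \big[Rplus/0]_(i < n) F2 i.
Proof.
have -> : \big[Rplus/0]_(i < n) F1 i - \big[Rplus/0]_(i < n) F2 i =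
   \big[Rplus/0]_(i < n) F1 i + (-1) * \big[Rplus/0]_(i < n) F2 i by ring.
rewrite -rsum_scal -big_split; apply: eq_bigr => i _ /=; ring.
Qed.

Lemma rsum_abs n (F : 'I_n -> R) :
  Rabs (\big[Rplus/0]_(i < n) F i) <= \big[Rplus/0]_(i < n) Rabs (F i).
Proof.
apply: (big_ind2 (fun a b => Rabs a <= b)); first by rewrite Rabs_R0; lra.
- move=> a1 a2 b1 b2 H1 H2; apply: Rle_trans (Rabs_triang _ _) _; lra.
- move=> i _; lra.
Qed.

Lemma rsum_ge0 n (F : 'I_n -> R) : (forall i, 0 <= F i) -> 0 <= \big[Rplus/0]_(i < n) F i.
Proof. move=> H; apply: (big_ind (fun a => 0 <= a)) => //; [lra | move=> *; lra]. Qed.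

Lemma rsum_term n (F : 'I_n -> R) j : (forall i, 0 <= F i) ->
  F j <= \big[Rplus/0]_(i < n) F i.
Proof.
move=> H; rewrite (bigD1 j) //=.
rewrite -{1}(Rplus_0_r (F j)); apply: Rplus_le_compat_l.
apply: (big_ind (fun a => 0 <= a)) => //; [lra | move=> *; lra].
Qed.

Lemma rsum_const n c : \big[Rplus/0]_(i < n) c = INR n * c.
Proof.
elim: n => [|n IH]; first by rewrite big_ord0 /=; ring.
by rewrite big_ord_recr IH S_INR /=; ring.
Qed.

(* Euclidean structure of [vec n].  Besides the Euclidean norm [vnorm] we use
   the l1-norm [l1norm], which gives the crude but convenient Cauchy-Schwarz
   substitute |g.v| <= l1norm g * max_i |v i|. *)

Lemma dot_comm n (x y : vec n) : dot x y = dot y x.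
Proof. rewrite /dot; apply: eq_bigr => i _; ring. Qed.

Lemma dot_lin n (g a b : vec n) al be :
  dot g (fun i => al * a i + be * b i) = al * dot g a + be * dot g b.
Proof. rewrite /dot -!rsum_scal -big_split; apply: eq_bigr => i _ /=; ring. Qed.

Lemma dot_ge0 n (x : vec n) : 0 <= dot x x.
Proof. apply: rsum_ge0 => i; nra. Qed.

Lemma coord_sq_le n (x : vec n) i : x i * x i <= dot x x.
Proof. by apply: (@rsum_term n (fun i => x i * x i)) => j; nra. Qed.

Lemma dot_zero_coord n (x : vec n) i : dot x x = 0 -> x i = 0.
Proof. move=> H; have := coord_sq_le x i; rewrite H; nra. Qed.

Lemma coord_le_norm n (x : vec n) i : Rabs (x i) <= vnorm x.
Proof.
rewrite /vnorm -(sqrt_Rsqr (Rabs (x i))); last exact: Rabs_pos.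
apply: sqrt_le_1_alt; rewrite /Rsqr -Rabs_mult Rabs_right; last nra.
exact: coord_sq_le.
Qed.

Lemma coord_prod_le n (u : vec n) i k : Rabs (u k * u i) <= dot u u.
Proof.
have := coord_sq_le u i; have := coord_sq_le u k.
have E1 : u i * u i = Rabs (u i) * Rabs (u i) by rewrite -Rabs_mult Rabs_right //; nra.
have E2 : u k * u k = Rabs (u k) * Rabs (u k) by rewrite -Rabs_mult Rabs_right //; nra.
rewrite Rabs_mult E1 E2; have := Rabs_pos (u k); have := Rabs_pos (u i); nra.
Qed.

Lemma vnorm_coord_bound n (v : vec n) a : (forall i, Rabs (v i) <= a) -> vnorm v <= INR n * a.
Proof.
case: n v => [|n] v H; first by rewrite /vnorm /dot big_ord0 sqrt_0 /=; lra.
have a0 : 0 <= a by apply: Rle_trans (Rabs_pos _) (H ord0).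
rewrite /vnorm -(sqrt_Rsqr (INR n.+1 * a)); last by apply: Rmult_le_pos => //; exact: pos_INR.
apply: sqrt_le_1_alt; apply: Rle_trans (rsum_le (F2 := fun _ => a * a) _) _.
  move=> i; have := H i; have := Rabs_pos (v i).
  have -> : v i * v i = Rabs (v i) * Rabs (v i) by rewrite -Rabs_mult Rabs_right //; nra.
  nra.
rewrite rsum_const /Rsqr; have := pos_INR n; rewrite S_INR; nra.
Qed.

Lemma vsub_vadd n (x y : vec n) : vadd x (vsub y x) = y.
Proof. apply: functional_extensionality => i; rewrite /vadd /vsub; ring. Qed.

Definition l1norm {n} (g : vec n) : R := \big[Rplus/0]_(i < n) Rabs (g i).

Lemma l1norm_ge0 n (g : vec n) : 0 <= l1norm g.
Proof. apply: rsum_ge0 => i; exact: Rabs_pos. Qed.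

Lemma coord_le_l1norm n (p : vec n) k : Rabs (p k) <= l1norm p.
Proof. by apply: (@rsum_term n (fun i => Rabs (p i))) => j; exact: Rabs_pos. Qed.

Lemma dot_bound n (g v : vec n) a : (forall i, Rabs (v i) <= a) ->
  Rabs (dot g v) <= l1norm g * a.
Proof.
move=> H; apply: Rle_trans (rsum_abs _) _.
rewrite /l1norm -(Rmult_comm a) -rsum_scal; apply: rsum_le => i.
rewrite Rabs_mult (Rmult_comm a); apply: Rmult_le_compat_l; [exact: Rabs_pos | exact: H].
Qed.

Lemma dot_diff_bound n (a b q : vec n) e : (forall i, Rabs (a i - b i) <= e) ->
  Rabs (dot a q - dot b q) <= l1norm q * e.
Proof.
move=> H; have -> : dot a q - dot b q = dot q (vsub a b).
  by rewrite /dot -rsum_sub; apply: eq_bigr => i _; rewrite /vsub; ring.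
by apply: dot_bound => i; exact: H.
Qed.

Lemma weighted_sum_bound n (X : 'I_n -> R) (p : vec n) c :
  (forall k, Rabs (X k) <= Rabs (p k) * c) -> Rabs (\big[Rplus/0]_(k < n) X k) <= c * l1norm p.
Proof.
move=> H; apply: Rle_trans (rsum_abs _) _; apply: Rle_trans (rsum_le H) _.
by rewrite /l1norm -rsum_scal; right; apply: eq_bigr => i _; ring.
Qed.

Lemma uniform_delta n (A : Type) (d : A -> R) (Q : 'I_n -> A -> Prop) :
  (forall i, exists del, 0 < del /\ forall y, d y < del -> Q i y) ->
  exists del, 0 < del /\ forall i y, d y < del -> Q i y.
Proof.
move=> H.
suff [del [Hd Hl]] : exists del, 0 < del /\
    forall i, i \in enum 'I_n -> forall y, d y < del -> Q i y.
  by exists del; split => // i y; apply: Hl; rewrite mem_enum.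
elim: (enum 'I_n) => [|i l [dl [Hdl Hl]]]; first by exists 1; split => //; lra.
have [di [Hdi Hi]] := H i.
exists (Rmin di dl); split; first exact: Rmin_glb_lt.
move=> j; rewrite in_cons => /orP [/eqP -> | Hj] y Hy.
  by apply: Hi; apply: Rlt_le_trans Hy (Rmin_l _ _).
by apply: Hl => //; apply: Rlt_le_trans Hy (Rmin_r _ _).
Qed.

Lemma shrink a r : 0 <= a -> 0 < r -> a * (r / (a + 1)) < r.
Proof.
move=> a0 r0; have -> : a * (r / (a + 1)) = r - r / (a + 1) by field; lra.
have : 0 < r / (a + 1) by apply: Rdiv_lt_0_compat; lra.
lra.
Qed.

Lemma Rabs_quot_lt X h e : h <> 0 -> Rabs X < e * Rabs h -> Rabs (X / h) < e.
Proof.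
move=> h0 H; have ha : 0 < Rabs h by apply: Rabs_pos_lt.
rewrite /Rdiv Rabs_mult Rabs_inv; apply: (Rmult_lt_reg_r (Rabs h)) => //.
by rewrite Rmult_assoc Rinv_l; lra.
Qed.

Lemma Rabs_lt_quot X h e : h <> 0 -> Rabs (X / h) < e -> Rabs X < e * Rabs h.
Proof.
move=> h0 H; have ha : 0 < Rabs h by apply: Rabs_pos_lt.
have -> : X = X / h * h by field.
by rewrite Rabs_mult; apply: Rmult_lt_compat_r.
Qed.

Lemma Rabs_le_elim x a : Rabs x <= a -> - a <= x <= a.
Proof. move=> H; have := Rle_abs x; have := Rle_abs (- x); rewrite Rabs_Ropp; lra. Qed.

Lemma deriv_cont F x l : derivable_pt_lim F x l ->
  forall e, 0 < e -> exists del, 0 < del /\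
    forall y, Rabs (y - x) < del -> Rabs (F y - F x) < e.
Proof.
move=> H e He.
have [del [Hdel Hy]] := derivable_continuous_pt F x (exist _ l H) e He.
exists del; split => // y Hyx.
case: (Req_dec y x) => [->|ne]; first by rewrite Rminus_diag Rabs_R0.
exact: (Hy y (conj (conj I (nesym ne)) Hyx)).
Qed.

Lemma deriv_sum (I : eqType) (r : seq I) (F : I -> R -> R) (dF : I -> R) t :
  (forall i, derivable_pt_lim (F i) t (dF i)) ->
  derivable_pt_lim (fun s => \big[Rplus/0]_(i <- r) F i s) t (\big[Rplus/0]_(i <- r) dF i).
Proof.
move=> H; elim: r => [|i r IH].
  rewrite big_nil; apply: derivable_pt_lim_ext (derivable_pt_lim_const 0 t) => s.
  by rewrite big_nil.
rewrite big_cons; apply: derivable_pt_lim_ext (derivable_pt_lim_plus _ _ t _ _ (H i) IH) => s.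
by rewrite big_cons.
Qed.

Lemma deriv_affine a b s : derivable_pt_lim (fun s => a + s * b) s b.
Proof.
have := derivable_pt_lim_plus _ _ s _ _ (derivable_pt_lim_const a s)
  (derivable_pt_lim_scal _ b s _ (derivable_pt_lim_id s)).
rewrite Rplus_0_l Rmult_1_r; apply: derivable_pt_lim_ext => u.
rewrite /plus_fct /fct_cte /mult_real_fct /Ranalysis1.id; ring.
Qed.

Lemma in_interval_convex lo hi a b t :
  in_interval lo hi a -> in_interval lo hi b -> a <= t <= b -> in_interval lo hi t.
Proof. case: lo => [l|]; case: hi => [h|] /=; rewrite /in_interval; intuition lra. Qed.

Lemma interval_open lo hi t : in_interval lo hi t ->
  exists e, 0 < e /\ forall s, Rabs (s - t) < e -> in_interval lo hi s.
Proof.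
case: lo => [l|]; case: hi => [h|]; rewrite /in_interval => [[H1 H2]].
- exists (Rmin (t - l) (h - t)); split; first by apply: Rmin_glb_lt; lra.
  move=> s /Rabs_def2 Hs; have := Rmin_l (t - l) (h - t); have := Rmin_r (t - l) (h - t); lra.
- by exists (t - l); split; [lra | move=> s /Rabs_def2; lra].
- by exists (h - t); split; [lra | move=> s /Rabs_def2; lra].
- by exists 1; split => //; lra.
Qed.

Lemma segment_connected a b (S : R -> Prop) : a <= b -> S a ->
  (forall t, a <= t <= b -> S t ->
     exists e, 0 < e /\ forall s, a <= s <= b -> Rabs (s - t) < e -> S s) ->
  (forall t, a <= t <= b -> ~ S t ->
     exists e, 0 < e /\ forall s, a <= s <= b -> Rabs (s - t) < e -> ~ S s) ->
  S b.
Proof.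
move=> hab Sa Hop Hcl.
pose E x := a <= x <= b /\ forall y, a <= y <= x -> S y.
have Ea : E a by split; [lra | move=> y Hy; have -> : y = a by lra].
have [m [Hub Hlub]] := @completeness E (ex_intro _ b (fun x Ex => proj2 (proj1 Ex))) (ex_intro _ a Ea).
have ma : a <= m by apply: Hub.
have mb : m <= b by apply: Hlub => x [[]].
have approx : forall e, 0 < e -> exists x, E x /\ m - e < x.
  move=> e He; apply: NNPP => Hn; have : m <= m - e; last lra.
  by apply: Hlub => x Ex; apply: Rnot_lt_le => Hx; apply: Hn; exists x.
have Sm : S m.
  apply: NNPP => Hnm; have [e [He He']] := Hcl m (conj ma mb) Hnm.
  have [x [[Hx1 Hx2] Hx3]] := approx e He; have xm : x <= m by apply: Hub.
  by apply: (He' x); [lra | rewrite Rabs_left1; lra | apply: Hx2; lra].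
case: (Req_dec m b) => [<- //| mb'].
have [e [He He']] := Hop m (conj ma mb) Sm.
have [x [[Hx1 Hx2] Hx3]] := approx e He; have xm : x <= m by apply: Hub.
set z := Rmin (m + e / 2) b.
have zm : m < z by apply: Rmin_glb_lt; lra.
have : z <= m; last lra.
apply: Hub; split; first by split; [lra | exact: Rmin_r].
move=> y Hy; case: (Rle_lt_dec y x) => Hyx; first by apply: Hx2; lra.
apply: He'; first by split; [lra | apply: Rle_trans (proj2 Hy) (Rmin_r _ _)].
have : z <= m + e / 2 by exact: Rmin_l.
by move=> ?; apply: Rabs_def1; lra.
Qed.

Definition rel_open lo hi (S : R -> Prop) : Prop :=
  forall t, in_interval lo hi t -> S t ->
    exists e, 0 < e /\ forall s, in_interval lo hi s -> Rabs (s - t) < e -> S s.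

Lemma interval_connected lo hi (S : R -> Prop) t0 : in_interval lo hi t0 -> S t0 ->
  rel_open lo hi S -> rel_open lo hi (fun t => ~ S t) ->
  forall t, in_interval lo hi t -> S t.
Proof.
move=> I0 S0 Hop Hcl t It.
have restrict : forall (P : R -> Prop) a b, in_interval lo hi a -> in_interval lo hi b ->
    rel_open lo hi P -> forall u, a <= u <= b -> P u ->
    exists e, 0 < e /\ forall s, a <= s <= b -> Rabs (s - u) < e -> P s.
  move=> P a b Ia Ib HP u Hu Pu.
  have [e [He H]] := HP u (in_interval_convex Ia Ib Hu) Pu.
  by exists e; split => // s Hs; apply: H; exact: in_interval_convex Ia Ib Hs.
case: (Rle_lt_dec t0 t) => Ht.
  by apply: (@segment_connected t0 t S Ht S0); apply: restrict.
have mirror : forall P : R -> Prop, rel_open lo hi P -> forall u, - t0 <= u <= - t ->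
    P (- u) -> exists e, 0 < e /\ forall s, - t0 <= s <= - t -> Rabs (s - u) < e -> P (- s).
  move=> P HP u Hu Pu.
  have [e [He H]] := restrict P t t0 It I0 HP (- u) ltac:(lra) Pu.
  exists e; split => // s Hs Hse; apply: H; first lra.
  by rewrite -Rabs_Ropp; have -> : - (- s - - u) = s - u by ring.
have := @segment_connected (- t0) (- t) (fun x => S (- x)) ltac:(lra).
rewrite /= !Ropp_involutive; apply => //; move=> u Hu Su; [exact: mirror | exact: (mirror (fun x => ~ S x))].
Qed.

Lemma const_on_interval lo hi (phi : R -> R) t0 t :
  (forall s, in_interval lo hi s -> derivable_pt_lim phi s 0) ->
  in_interval lo hi t0 -> in_interval lo hi t -> phi t = phi t0.
Proof.
move=> Hd I0 It.
case: (Rtotal_order t0 t) => [lt|[-> //|gt]].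
- have [c [Ec _]] := MVT_cor2 phi (fun _ => 0) t0 t lt
    (fun c Hc => Hd c (in_interval_convex I0 It Hc)); lra.
- have [c [Ec _]] := MVT_cor2 phi (fun _ => 0) t t0 gt
    (fun c Hc => Hd c (in_interval_convex It I0 Hc)); lra.
Qed.

Lemma deriv_locally_const (F : R -> R) a : 0 < a ->
  (forall h, Rabs h < a -> F h = F 0) -> derivable_pt_lim F 0 0.
Proof.
move=> a0 H eps Heps; exists (mkposreal a a0) => h h0 /= Hh.
by rewrite Rplus_0_l (H h Hh) Rminus_diag /Rdiv Rmult_0_l Rminus_0_r Rabs_R0.
Qed.

(* Gronwall's inequality in the form needed here: a nonnegative W with
   |W'| <= K W that vanishes at one point vanishes identically.  The weight
   exp(c (s - t1)) with c = -K (resp. c = K) makes W e^{c (s - t1)}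
   nonincreasing to the right (resp. nondecreasing to the left) of t1. *)
Lemma deriv_weighted W w c t1 s : derivable_pt_lim W s w ->
  derivable_pt_lim (fun s => W s * exp (c * (s - t1))) s
    ((w + c * W s) * exp (c * (s - t1))).
Proof.
move=> H.
have Hlin : derivable_pt_lim (fun s => c * (s - t1)) s c.
  by apply: derivable_pt_lim_ext (deriv_affine (- c * t1) c s) => u; ring.
have := derivable_pt_lim_mult _ _ s _ _ H
  (derivable_pt_lim_comp _ _ s _ _ Hlin (derivable_pt_lim_exp (c * (s - t1)))).
have -> : w * exp (c * (s - t1)) + W s * (exp (c * (s - t1)) * c) =
          (w + c * W s) * exp (c * (s - t1)) by ring.
by apply: derivable_pt_lim_ext => u; rewrite /mult_fct /comp.
Qed.

Lemma gronwall_local (W dW : R -> R) t1 K eta : 0 <= K ->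
  (forall t, Rabs (t - t1) < eta ->
     derivable_pt_lim W t (dW t) /\ 0 <= W t /\ Rabs (dW t) <= K * W t) ->
  W t1 = 0 -> forall t, Rabs (t - t1) < eta -> W t = 0.
Proof.
move=> HK Hb W0 t Ht.
have [_ [Wt _]] := Hb t Ht.
have near : forall c, Rmin t t1 <= c <= Rmax t t1 -> Rabs (c - t1) < eta.
  move=> c Hc; apply: Rle_lt_trans Ht; move: Hc.
  rewrite /Rmin /Rmax; case: Rle_dec => ? Hc;
    [rewrite !Rabs_left1 | rewrite !Rabs_right]; lra.
case: (Rtotal_order t1 t) => [lt|[<- //|tlt]].
- have [c [Ec Hc]] := MVT_cor2 _ _ t1 t lt (fun c Hc =>
    deriv_weighted (- K) t1 (proj1 (Hb c (near c ltac:(rewrite Rmin_right ?Rmax_left; lra))))).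
  have [_ [Wc /Rabs_le_elim Bc]] := Hb c (near c ltac:(rewrite Rmin_right ?Rmax_left; lra)).
  have P : 0 <= - (dW c + - K * W c) * exp (- K * (c - t1)).
    by apply: Rmult_le_pos; [lra | exact: Rlt_le (exp_pos _)].
  have := exp_pos (- K * (t - t1)).
  move: Ec; rewrite W0 Rmult_0_l Rminus_0_r; nra.
- have [c [Ec Hc]] := MVT_cor2 _ _ t t1 tlt (fun c Hc =>
    deriv_weighted K t1 (proj1 (Hb c (near c ltac:(rewrite Rmin_left ?Rmax_right; lra))))).
  have [_ [Wc /Rabs_le_elim Bc]] := Hb c (near c ltac:(rewrite Rmin_left ?Rmax_right; lra)).
  have P : 0 <= (dW c + K * W c) * exp (K * (c - t1)).
    by apply: Rmult_le_pos; [lra | exact: Rlt_le (exp_pos _)].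
  have := exp_pos (K * (t - t1)).
  move: Ec; rewrite W0 Rmult_0_l Rminus_0_l; nra.
Qed.

(* Gronwall on a whole interval, with the constant K allowed to vary locally:
   the zero set of W is open by [gronwall_local] and closed by continuity. *)
Lemma gronwall_vanish lo hi (W dW : R -> R) t0 :
  (forall t1, in_interval lo hi t1 -> exists eta K, 0 < eta /\ 0 <= K /\
     forall t, Rabs (t - t1) < eta -> in_interval lo hi t /\
       derivable_pt_lim W t (dW t) /\ 0 <= W t /\ Rabs (dW t) <= K * W t) ->
  in_interval lo hi t0 -> W t0 = 0 -> forall t, in_interval lo hi t -> W t = 0.
Proof.
move=> Hloc I0 W0; apply: (interval_connected I0 W0) => t1 It1 Wt1.
- have [eta [K [Heta [HK Hb]]]] := Hloc t1 It1.
  exists eta; split => // s _ Hs.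
  apply: (@gronwall_local W dW t1 K eta HK _ Wt1 s Hs) => t Ht.
  by have [_ H] := Hb t Ht.
- have [eta [K [Heta [HK Hb]]]] := Hloc t1 It1.
  have [_ [Hd _]] := Hb t1 ltac:(by rewrite Rminus_diag Rabs_R0).
  have [d [Hd0 H]] := deriv_cont Hd (Rabs_pos_lt _ Wt1).
  exists d; split => // s _ Hss Ws.
  by have := H s Hss; rewrite Ws Rminus_0_l Rabs_Ropp; lra.
Qed.

Lemma minor_deriv n (u : R -> vec n) (a v : vec n) t i j :
  (forall i, derivable_pt_lim (fun s => u s i) t (a i)) ->
  derivable_pt_lim (fun s => u s i * v j - u s j * v i) t (a i * v j - a j * v i).
Proof.
move=> Hu; have := derivable_pt_lim_minus _ _ t _ _
  (derivable_pt_lim_mult _ _ t _ _ (Hu i) (derivable_pt_lim_const (v j) t))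
  (derivable_pt_lim_mult _ _ t _ _ (Hu j) (derivable_pt_lim_const (v i) t)).
rewrite /fct_cte !Rmult_0_r !Rplus_0_r.
by apply: derivable_pt_lim_ext => s; rewrite /minus_fct /mult_fct /fct_cte.
Qed.

(* If u' = mu u on an interval, with |mu| locally bounded, then u keeps its
   direction: the minors u_i v_j - u_j v_i against v = u(t0) vanish.  Their
   sum of squares W satisfies W' = 2 mu W, so Gronwall applies. *)
Lemma direction_preserved n lo hi (u a : R -> vec n) (K : R -> R) t0 j :
  in_interval lo hi t0 ->
  (forall t, in_interval lo hi t -> forall i, derivable_pt_lim (fun s => u s i) t (a t i)) ->
  (forall t, in_interval lo hi t -> exists mu, Rabs mu <= K t /\ forall i, a t i = mu * u t i) ->
  (forall t1, in_interval lo hi t1 -> exists eta K1, 0 < eta /\ 0 <= K1 /\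
     forall t, Rabs (t - t1) < eta -> K t <= K1) ->
  forall t, in_interval lo hi t -> forall i, u t i * u t0 j - u t j * u t0 i = 0.
Proof.
move=> It0 Hu Hmu HK.
set v := u t0.
pose wedge t i := u t i * v j - u t j * v i.
pose dwedge t i := a t i * v j - a t j * v i.
pose W t := dot (wedge t) (wedge t).
pose dW t := \big[Rplus/0]_(i < n) (dwedge t i * wedge t i + wedge t i * dwedge t i).
have Hw : forall t, in_interval lo hi t -> forall i, derivable_pt_lim (fun s => wedge s i) t (dwedge t i).
  by move=> t It i; exact: minor_deriv (Hu t It).
have HdW : forall t, in_interval lo hi t -> derivable_pt_lim W t (dW t).
  move=> t It; rewrite /W /dot /dW.
  apply: (@deriv_sum _ _ (fun i s => wedge s i * wedge s i)) => i.
  exact: (derivable_pt_lim_mult _ _ t _ _ (Hw t It i) (Hw t It i)).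
have Hbound : forall t, in_interval lo hi t -> Rabs (dW t) <= 2 * K t * W t.
  move=> t It; have [mu [Hmu_le Ha]] := Hmu t It.
  have -> : dW t = 2 * mu * W t.
    by rewrite /dW /W /dot -rsum_scal; apply: eq_bigr => i _; rewrite /dwedge /wedge !Ha; ring.
  rewrite !Rabs_mult Rabs_right ?(Rabs_right (W t)); try (by apply: Rle_ge; exact: dot_ge0); try lra.
  by apply: Rmult_le_compat_r; [exact: dot_ge0 | lra].
have W0 : forall t, in_interval lo hi t -> W t = 0.
  apply: (gronwall_vanish (dW := dW) _ It0); last by apply: big1 => i _; rewrite /wedge /v; ring.
  move=> t1 It1.
  have [e1 [He1 Ho]] := interval_open It1.
  have [e2 [K1 [He2 [HK1 HKb]]]] := HK t1 It1.
  exists (Rmin e1 e2), (2 * K1); split; first exact: Rmin_glb_lt.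
  split; first lra.
  move=> t Ht; have It := Ho t (Rlt_le_trans _ _ _ Ht (Rmin_l _ _)).
  have Kt := HKb t (Rlt_le_trans _ _ _ Ht (Rmin_r _ _)).
  do 3 (split; first by [exact: It | exact: HdW | exact: dot_ge0]).
  apply: Rle_trans (Hbound t It) _; apply: Rmult_le_compat_r; [exact: dot_ge0 | lra].
by move=> t It i; exact: (dot_zero_coord i (W0 t It)).
Qed.

Lemma line_of_parallel_velocity n lo hi (gamma V : R -> vec n) (v : vec n) j t0 :
  v j <> 0 -> in_interval lo hi t0 ->
  (forall t, in_interval lo hi t -> forall i, derivable_pt_lim (fun s => gamma s i) t (V t i)) ->
  (forall t, in_interval lo hi t -> forall i, V t i * v j - V t j * v i = 0) ->
  forall t, in_interval lo hi t -> exists s, forall i, gamma t i = gamma t0 i + s * v i.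
Proof.
move=> vj It0 Hg Hpar t It; exists ((gamma t j - gamma t0 j) / v j) => i.
pose phi s := gamma s i - v i / v j * gamma s j.
have Hphi : forall s, in_interval lo hi s -> derivable_pt_lim phi s 0.
  move=> s Is; have := derivable_pt_lim_minus _ _ s _ _ (Hg s Is i)
    (derivable_pt_lim_scal _ (v i / v j) s _ (Hg s Is j)).
  have -> : V s i - v i / v j * V s j = (V s i * v j - V s j * v i) / v j by field.
  rewrite Hpar // /Rdiv Rmult_0_l.
  by apply: derivable_pt_lim_ext => z; rewrite /minus_fct /mult_real_fct.
have := const_on_interval Hphi It0 It; rewrite /phi => E.
apply: (Rmult_eq_reg_r (v j)) => //.
have -> : (gamma t0 i + (gamma t j - gamma t0 j) / v j * v i) * v j =
          gamma t0 i * v j + (gamma t j - gamma t0 j) * v i by field.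
have -> : gamma t i = gamma t0 i + v i / v j * (gamma t j - gamma t0 j) by lra.
by field.
Qed.

Lemma curve_increment n (c : R -> vec n) (d : vec n) t0 :
  (forall k, derivable_pt_lim (fun s => c s k) t0 (d k)) ->
  forall e, 0 < e -> exists del, 0 < del /\ forall h, h <> 0 -> Rabs h < del ->
    forall k, Rabs (c (t0 + h) k - c t0 k - h * d k) <= e * Rabs h.
Proof.
move=> Hc e He.
have Hk : forall k, exists del, 0 < del /\ forall h, Rabs h < del ->
    h <> 0 -> Rabs (c (t0 + h) k - c t0 k - h * d k) <= e * Rabs h.
  move=> k; have [del Hdel] := Hc k e He; exists del; split; first exact: cond_pos.
  move=> h Hh h0; apply: Rlt_le; apply: Rabs_lt_quot => //.
  have -> : (c (t0 + h) k - c t0 k - h * d k) / h = (c (t0 + h) k - c t0 k) / h - d k by field.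
  exact: Hdel.
have [del [Hdel H]] := uniform_delta Hk.
by exists del; split => // h h0 Hh k; apply: H.
Qed.

Lemma increment_norm_bound n (k d : vec n) h e : e <= 1 ->
  (forall i, Rabs (k i - h * d i) <= e * Rabs h) -> vnorm k <= INR n * (l1norm d + 1) * Rabs h.
Proof.
move=> e1 Hk; rewrite Rmult_assoc; apply: vnorm_coord_bound => i.
have := Hk i; have := Rabs_triang (k i - h * d i) (h * d i).
have -> : k i - h * d i + h * d i = k i by ring.
rewrite Rabs_mult; have := coord_le_l1norm d i; have := Rabs_pos (d i); have := Rabs_pos h; nra.
Qed.

Lemma chain_rule n (phi : vec n -> R) (g : vec n) (c : R -> vec n) (d : vec n) t0 :
  has_grad phi g (c t0) ->
  (forall k, derivable_pt_lim (fun s => c s k) t0 (d k)) ->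
  derivable_pt_lim (fun s => phi (c s)) t0 (dot g d).
Proof.
move=> Hg Hc eps Heps.
have Sg0 := l1norm_ge0 g; have Sd0 := l1norm_ge0 d.
set A := INR n * (l1norm d + 1).
have A0 : 0 <= A by have := pos_INR n; rewrite /A; nra.
have [d1 [Hd1 H1]] := Hg (eps / 2 / (A + 1)) ltac:(apply: Rdiv_lt_0_compat; lra).
set e2 := Rmin 1 (eps / 2 / (l1norm g + 1)).
have e2p : 0 < e2 by apply: Rmin_glb_lt; [lra | apply: Rdiv_lt_0_compat; lra].
have [d2 [Hd2 H2]] := curve_increment Hc e2p.
have delp : 0 < Rmin d2 (d1 / (A + 1)) by apply: Rmin_glb_lt => //; apply: Rdiv_lt_0_compat; lra.
exists (mkposreal _ delp) => h h0 /= Hh.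
have ha : 0 < Rabs h by apply: Rabs_pos_lt.
set k := vsub (c (t0 + h)) (c t0).
have Hk : forall i, Rabs (k i - h * d i) <= e2 * Rabs h.
  by move=> i; apply: H2 => //; apply: Rlt_le_trans Hh (Rmin_l _ _).
have Hnk : vnorm k <= A * Rabs h := increment_norm_bound (Rmin_l _ _) Hk.
have Hnk1 : vnorm k < d1.
  have : A * Rabs h <= A * (d1 / (A + 1)).
    by apply: Rmult_le_compat_l => //; apply: Rlt_le; apply: Rlt_le_trans Hh (Rmin_r _ _).
  have := shrink A0 Hd1; lra.
have Hf := H1 k Hnk1; rewrite vsub_vadd in Hf.
have Hdk : Rabs (dot g k - h * dot g d) <= l1norm g * (e2 * Rabs h).
  have -> : dot g k - h * dot g d = dot g (fun i => 1 * k i + (- h) * d i) by rewrite dot_lin; ring.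
  by apply: dot_bound => i; have -> : 1 * k i + - h * d i = k i - h * d i by ring.
have E1 : eps / 2 / (A + 1) * vnorm k < eps / 2 * Rabs h.
  have := shrink A0 (ltac:(lra) : 0 < eps / 2).
  have := sqrt_pos (dot k k); have : 0 <= eps / 2 / (A + 1) by apply: Rlt_le; apply: Rdiv_lt_0_compat; lra.
  nra.
have E2 : l1norm g * (e2 * Rabs h) <= eps / 2 * Rabs h.
  have : l1norm g * e2 <= eps / 2.
    have := shrink Sg0 (ltac:(lra) : 0 < eps / 2); have := Rmin_r 1 (eps / 2 / (l1norm g + 1)).
    rewrite -/e2; nra.
  nra.
have -> : (phi (c (t0 + h)) - phi (c t0)) / h - dot g d =
  (phi (c (t0 + h)) - phi (c t0) - dot g d * h) / h by field.
apply: Rabs_quot_lt => //.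
have -> : phi (c (t0 + h)) - phi (c t0) - dot g d * h =
  (phi (c (t0 + h)) - phi (c t0) - dot g k) + (dot g k - h * dot g d) by ring.
apply: Rle_lt_trans (Rabs_triang _ _) _; lra.
Qed.

Lemma grad_cont n (phi : vec n -> R) g x : has_grad phi g x ->
  forall e, 0 < e -> exists del, 0 < del /\
    forall y, vnorm (vsub y x) < del -> Rabs (phi y - phi x) < e.
Proof.
move=> H e He.
have [d1 [Hd1 H1]] := H 1 Rlt_0_1.
have Sg0 := l1norm_ge0 g.
have ep : 0 < e / (l1norm g + 1) by apply: Rdiv_lt_0_compat; lra.
exists (Rmin d1 (e / (l1norm g + 1))); split; first exact: Rmin_glb_lt.
move=> y Hy; set h := vsub y x in Hy *.
have := H1 h (Rlt_le_trans _ _ _ Hy (Rmin_l _ _)); rewrite vsub_vadd => Hb.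
have Hh : (l1norm g + 1) * vnorm h < e.
  have := Rmult_lt_compat_l (l1norm g + 1) _ _ ltac:(lra) (Rlt_le_trans _ _ _ Hy (Rmin_r _ _)).
  by have -> : (l1norm g + 1) * (e / (l1norm g + 1)) = e by field; lra.
have Hd : Rabs (dot g h) <= l1norm g * vnorm h by apply: dot_bound => i; exact: coord_le_norm.
have := Rabs_triang (phi y - phi x - dot g h) (dot g h).
have -> : phi y - phi x - dot g h + dot g h = phi y - phi x by ring.
lra.
Qed.

Lemma curve_cont n (c : R -> vec n) (d : vec n) t1 :
  (forall k, derivable_pt_lim (fun s => c s k) t1 (d k)) ->
  forall rho, 0 < rho -> exists del, 0 < del /\
    forall t, Rabs (t - t1) < del -> vnorm (vsub (c t) (c t1)) < rho.
Proof.
move=> Hc rho Hr.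
have n0 := pos_INR n.
have Hk : forall k, exists del, 0 < del /\ forall t, Rabs (t - t1) < del ->
    Rabs (c t k - c t1 k) < rho / (INR n + 1).
  by move=> k; apply: (deriv_cont (Hc k)); apply: Rdiv_lt_0_compat; lra.
have [del [Hd H]] := uniform_delta Hk.
exists del; split => // t Ht.
have := vnorm_coord_bound (fun k => Rlt_le _ _ (H k t Ht)).
have := shrink n0 Hr; rewrite /vsub; lra.
Qed.

Definition plane {n} (x p q : vec n) (s t : R) : vec n := fun k => x k + s * p k + t * q k.

Lemma plane00 n (x p q : vec n) : plane x p q 0 0 = x.
Proof. apply: functional_extensionality => k; rewrite /plane; ring. Qed.

Lemma deriv_plane_s n (x p q : vec n) t s k :
  derivable_pt_lim (fun s => plane x p q s t k) s (p k).
Proof. by apply: derivable_pt_lim_ext (deriv_affine (x k + t * q k) (p k) s) => u; rewrite /plane; ring. Qed.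

Lemma deriv_plane_t n (x p q : vec n) s t k :
  derivable_pt_lim (fun t => plane x p q s t k) t (q k).
Proof. by apply: derivable_pt_lim_ext (deriv_affine (x k + s * p k) (q k) t) => u; rewrite /plane; ring. Qed.

Lemma plane_dist n (x p q : vec n) s t s' t' :
  vnorm (vsub (plane x p q s t) (plane x p q s' t')) <=
  INR n * (Rabs (s - s') * l1norm p + Rabs (t - t') * l1norm q).
Proof.
apply: vnorm_coord_bound => k; rewrite /vsub /plane.
have -> : x k + s * p k + t * q k - (x k + s' * p k + t' * q k) =
          (s - s') * p k + (t - t') * q k by ring.
apply: Rle_trans (Rabs_triang _ _) _; rewrite !Rabs_mult.
have := coord_le_l1norm p k; have := coord_le_l1norm q k.
have := Rabs_pos (s - s'); have := Rabs_pos (t - t'); nra.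
Qed.

Lemma plane_near_base n (x p q : vec n) s u t : 0 <= s <= t -> 0 <= u <= t ->
  vnorm (vsub (plane x p q s u) x) <= INR n * (l1norm p + l1norm q) * t.
Proof.
move=> Hs Hu; have := plane_dist x p q s u 0 0; rewrite plane00 !Rminus_0_r.
rewrite (Rabs_right s) ?(Rabs_right u); try lra.
have := l1norm_ge0 p; have := l1norm_ge0 q => ? ?.
have : s * l1norm p + u * l1norm q <= t * (l1norm p + l1norm q) by nra.
move=> /(Rmult_le_compat_l (INR n) _ _ (pos_INR n)); lra.
Qed.

Section ImplicitZeroCurve.

Variables (g : R -> R -> R) (sig0 tau0 : R).
Hypothesis tau0p : 0 < tau0.
Hypothesis g_incr : forall s a b, Rabs s <= sig0 -> - tau0 <= a -> a < b -> b <= tau0 ->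
  g s a < g s b.
Hypothesis g_cont_s : forall s0 t, Rabs s0 <= sig0 -> forall e, 0 < e ->
  exists del, 0 < del /\ forall s, Rabs (s - s0) < del -> Rabs (g s t - g s0 t) < e.
Hypothesis g_cont_t : forall s, continuity (g s).
Hypothesis g00 : g 0 0 = 0.

Lemma sign_change_persists s0 a b : Rabs s0 <= sig0 -> g s0 a < 0 < g s0 b ->
  exists del, 0 < del /\ forall s, Rabs (s - s0) < del -> g s a < 0 < g s b.
Proof.
move=> Hs0 [Ha Hb].
have [da [Hda Ea]] := g_cont_s a Hs0 (ltac:(lra) : 0 < - g s0 a).
have [db [Hdb Eb]] := g_cont_s b Hs0 Hb.
exists (Rmin da db); split; first exact: Rmin_glb_lt.
move=> s Hs; have /Rabs_def2 := Ea s (Rlt_le_trans _ _ _ Hs (Rmin_l _ _)).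
have /Rabs_def2 := Eb s (Rlt_le_trans _ _ _ Hs (Rmin_r _ _)); lra.
Qed.

Lemma zero_between s a b z : Rabs s <= sig0 -> - tau0 <= a <= tau0 -> - tau0 <= b <= tau0 ->
  - tau0 <= z <= tau0 -> g s a < 0 < g s b -> g s z = 0 -> a < z < b.
Proof.
move=> Hs Ha Hb Hz [ga gb] gz; split; apply: Rnot_le_lt => Hle.
- case: (Req_dec z a) => [E|ne]; first by rewrite E in gz; lra.
  have := g_incr Hs (proj1 Hz) (ltac:(lra) : z < a) (proj2 Ha); lra.
- case: (Req_dec z b) => [E|ne]; first by rewrite E in gz; lra.
  have := g_incr Hs (proj1 Hb) (ltac:(lra) : b < z) (proj2 Hz); lra.
Qed.

Lemma implicit_zero_exists : 0 < sig0 -> exists sig1 (T : R -> R), 0 < sig1 <= sig0 /\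
  forall s, Rabs s < sig1 -> - (tau0 / 2) <= T s <= tau0 / 2 /\ g s (T s) = 0.
Proof.
move=> sig0p; set tau1 := tau0 / 2.
have abs0 : Rabs 0 <= sig0 by rewrite Rabs_R0; lra.
have sign0 : g 0 (- tau1) < 0 < g 0 tau1.
  have := g_incr abs0 (ltac:(rewrite /tau1; lra) : - tau0 <= - tau1)
    (ltac:(rewrite /tau1; lra) : - tau1 < 0) (ltac:(lra) : 0 <= tau0).
  have := g_incr abs0 (ltac:(lra) : - tau0 <= 0) (ltac:(rewrite /tau1; lra) : 0 < tau1)
    (ltac:(rewrite /tau1; lra) : tau1 <= tau0).
  rewrite g00; lra.
have [del [Hdel Hsign]] := sign_change_persists abs0 sign0.
have Hex : forall s, exists t, Rabs s < Rmin del sig0 -> - tau1 <= t <= tau1 /\ g s t = 0.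
  move=> s; case: (Rlt_dec (Rabs s) (Rmin del sig0)) => Hs; last by exists 0.
  have [Hn Hp] := Hsign s ltac:(rewrite Rminus_0_r; exact: Rlt_le_trans Hs (Rmin_l _ _)).
  have [z Hz] := IVT (g s) (- tau1) tau1 (g_cont_t s) ltac:(rewrite /tau1; lra) Hn Hp.
  by exists z.
have [T HT] := choice _ Hex.
exists (Rmin del sig0), T; split => //.
by split; [exact: Rmin_glb_lt | exact: Rmin_r].
Qed.

(* Any such choice of zeros is continuous: a sign change of g s0 around
   T(s0) persists for s near s0 and traps T(s). *)
Lemma implicit_zero_cont (T : R -> R) sig1 : sig1 <= sig0 ->
  (forall s, Rabs s < sig1 -> - (tau0 / 2) <= T s <= tau0 / 2 /\ g s (T s) = 0) ->
  forall s0, Rabs s0 < sig1 -> forall eta, 0 < eta -> exists del, 0 < del /\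
    forall s, Rabs (s - s0) < del -> Rabs (T s - T s0) < eta.
Proof.
move=> s10 HT s0 Hs0 eta Heta.
set tau1 := tau0 / 2 in HT.
have [B0 E0] := HT s0 Hs0.
set et := Rmin eta tau1.
have etp : 0 < et by apply: Rmin_glb_lt => //; rewrite /tau1; lra.
have ete : et <= eta := Rmin_l _ _; have ett : et <= tau1 := Rmin_r _ _.
have box : forall y, - tau1 <= y <= tau1 ->
    - tau0 <= y - et <= tau0 /\ - tau0 <= y + et <= tau0.
  by move=> y; rewrite /tau1 in ett |- *; lra.
have sgn : g s0 (T s0 - et) < 0 < g s0 (T s0 + et).
  rewrite -E0; have [[? ?] [? ?]] := box _ B0.
  by split; apply: g_incr; lra.
have [d [Hd Hsgn]] := sign_change_persists (ltac:(lra) : Rabs s0 <= sig0) sgn.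
exists (Rmin d (sig1 - Rabs s0)); split; first by apply: Rmin_glb_lt; lra.
move=> s Hs.
have Hs1 : Rabs s < sig1.
  have := Rmin_r d (sig1 - Rabs s0); have := Rabs_triang (s - s0) s0.
  have -> : s - s0 + s0 = s by ring.
  lra.
have [B E] := HT s Hs1.
have := zero_between (ltac:(lra) : Rabs s <= sig0) (proj1 (box _ B0)) (proj2 (box _ B0))
  (ltac:(rewrite /tau1 in B; lra) : - tau0 <= T s <= tau0)
  (Hsgn s (Rlt_le_trans _ _ _ Hs (Rmin_l _ _))) E.
by move=> H; apply: Rabs_def1; lra.
Qed.

Lemma implicit_zero_curve : 0 < sig0 -> exists sig1 (T : R -> R), 0 < sig1 /\
  (forall s, Rabs s < sig1 -> g s (T s) = 0) /\ T 0 = 0 /\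
  (forall s0, Rabs s0 < sig1 -> forall eta, 0 < eta -> exists del, 0 < del /\
     forall s, Rabs (s - s0) < del -> Rabs (T s - T s0) < eta).
Proof.
move=> sig0p; have [sig1 [T [[s1p s10] HT]]] := implicit_zero_exists sig0p.
exists sig1, T; split => //; split; first by move=> s Hs; case: (HT s Hs).
split; last exact: implicit_zero_cont.
have [B E] := HT 0 ltac:(by rewrite Rabs_R0).
have abs0 : Rabs 0 <= sig0 by rewrite Rabs_R0; lra.
case: (Rtotal_order (T 0) 0) => [lt|[//|gt0]].
- by have := g_incr abs0 (ltac:(lra) : - tau0 <= T 0) lt (ltac:(lra) : 0 <= tau0); lra.
- by have := g_incr abs0 (ltac:(lra) : - tau0 <= 0) gt0 (ltac:(lra) : T 0 <= tau0); lra.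
Qed.

End ImplicitZeroCurve.

Lemma level_offset_bound n (f : vec n -> R) (x u w : vec n) ep s tau :
  dot u w = 0 -> 0 <= ep -> f (plane x w u s tau) = f x ->
  (let k := vsub (plane x w u s tau) x in Rabs (f (vadd x k) - f x - dot u k) <= ep * vnorm k) ->
  Rabs tau * dot u u <= ep * (INR n * l1norm w * Rabs s + INR n * l1norm u * Rabs tau).
Proof.
rewrite /= vsub_vadd => Huw ep0 Hlev; rewrite Hlev.
set k := vsub (plane x w u s tau) x.
have -> : dot u k = tau * dot u u.
  have -> : dot u k = dot u (fun i => s * w i + tau * u i).
    by rewrite /dot; apply: eq_bigr => i _; rewrite /k /vsub /plane; ring.
  by rewrite dot_lin Huw; ring.
have -> : f x - f x - tau * dot u u = - (tau * dot u u) by ring.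
rewrite Rabs_Ropp Rabs_mult (Rabs_right (dot u u)); last exact: Rle_ge (dot_ge0 u).
move=> Hb; apply: Rle_trans Hb _; apply: Rmult_le_compat_l => //.
by have := plane_dist x w u s tau 0 0; rewrite plane00 !Rminus_0_r -/k; lra.
Qed.

Lemma level_curve_tangent n (f : vec n -> R) (x u w : vec n) (T : R -> R) sig1 :
  has_grad f u x -> dot u w = 0 -> 0 < dot u u -> T 0 = 0 -> 0 < sig1 ->
  (forall eta, 0 < eta -> exists del, 0 < del /\ forall s, Rabs (s - 0) < del -> Rabs (T s - T 0) < eta) ->
  (forall s, Rabs s < sig1 -> f (plane x w u s (T s)) = f x) ->
  derivable_pt_lim T 0 0.
Proof.
move=> Hg Huw U2p T0 s1p Tc Hlev eps Heps.
set U2 := dot u u in U2p.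
set A := INR n * l1norm u; set B := INR n * l1norm w.
have A0 : 0 <= A by apply: Rmult_le_pos; [exact: pos_INR | exact: l1norm_ge0].
have B0 : 0 <= B by apply: Rmult_le_pos; [exact: pos_INR | exact: l1norm_ge0].
set ep1 := Rmin (U2 / 2 / (A + 1)) (eps * U2 / 4 / (B + 1)).
have ep1p : 0 < ep1 by apply: Rmin_glb_lt; apply: Rdiv_lt_0_compat; nra.
have ep1A : ep1 * A <= U2 / 2.
  have := shrink A0 (ltac:(lra) : 0 < U2 / 2); have := Rmin_l (U2 / 2 / (A + 1)) (eps * U2 / 4 / (B + 1)).
  rewrite -/ep1; nra.
have ep1B : ep1 * B <= eps * U2 / 4.
  have := shrink B0 (ltac:(nra) : 0 < eps * U2 / 4); have := Rmin_r (U2 / 2 / (A + 1)) (eps * U2 / 4 / (B + 1)).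
  rewrite -/ep1; nra.
have [d1 [Hd1 H1]] := Hg ep1 ep1p.
have [dT [HdT HT]] := Tc (d1 / 2 / (A + 1)) ltac:(apply: Rdiv_lt_0_compat; lra).
have delp : 0 < Rmin (Rmin sig1 dT) (d1 / 2 / (B + 1)).
  by apply: Rmin_glb_lt; [exact: Rmin_glb_lt | apply: Rdiv_lt_0_compat; lra].
exists (mkposreal _ delp) => h h0 /= Hh.
have m1 := Rmin_l (Rmin sig1 dT) (d1 / 2 / (B + 1)); have m2 := Rmin_r (Rmin sig1 dT) (d1 / 2 / (B + 1)).
have m3 := Rmin_l sig1 dT; have m4 := Rmin_r sig1 dT.
have HTh : Rabs (T h) < d1 / 2 / (A + 1).
  by have := HT h ltac:(rewrite Rminus_0_r; lra); rewrite T0 Rminus_0_r.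
have Hnk : vnorm (vsub (plane x w u h (T h)) x) < d1.
  have := plane_dist x w u h (T h) 0 0; rewrite plane00 !Rminus_0_r.
  have : B * Rabs h <= B * (d1 / 2 / (B + 1)) by apply: Rmult_le_compat_l; lra.
  have : A * Rabs (T h) <= A * (d1 / 2 / (A + 1)) by apply: Rmult_le_compat_l; lra.
  have := shrink A0 (ltac:(lra) : 0 < d1 / 2); have := shrink B0 (ltac:(lra) : 0 < d1 / 2).
  rewrite /A /B; lra.
have := level_offset_bound Huw (Rlt_le _ _ ep1p) (Hlev h ltac:(lra)) (H1 _ Hnk).
rewrite -/A -/B -/U2 => Hb.
have ha : 0 < Rabs h by apply: Rabs_pos_lt.
have Ta := Rabs_pos (T h).
have HTb : Rabs (T h) <= eps / 2 * Rabs h.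
  by apply: (Rmult_le_reg_r (U2 / 2)); [lra | nra].
rewrite Rplus_0_l T0 !Rminus_0_r; apply: Rabs_quot_lt => //; nra.
Qed.

Lemma plane_curve_cont n (x p q : vec n) (T : R -> R) s0 :
  (forall eta, 0 < eta -> exists del, 0 < del /\
     forall s, Rabs (s - s0) < del -> Rabs (T s - T s0) < eta) ->
  forall rho, 0 < rho -> exists del, 0 < del /\ forall s, Rabs (s - s0) < del ->
    vnorm (vsub (plane x p q s (T s)) (plane x p q s0 (T s0))) < rho.
Proof.
move=> Tc r Hr.
set A := INR n * l1norm q; set B := INR n * l1norm p.
have A0 : 0 <= A by apply: Rmult_le_pos; [exact: pos_INR | exact: l1norm_ge0].
have B0 : 0 <= B by apply: Rmult_le_pos; [exact: pos_INR | exact: l1norm_ge0].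
have [dT [HdT HT]] := Tc (r / 2 / (A + 1)) ltac:(apply: Rdiv_lt_0_compat; lra).
exists (Rmin dT (r / 2 / (B + 1))); split.
  by apply: Rmin_glb_lt => //; apply: Rdiv_lt_0_compat; lra.
move=> s Hs.
have H1 := HT s (Rlt_le_trans _ _ _ Hs (Rmin_l _ _)).
have H2 := Rlt_le_trans _ _ _ Hs (Rmin_r _ _).
have := plane_dist x p q s (T s) s0 (T s0).
have : B * Rabs (s - s0) <= B * (r / 2 / (B + 1)) by apply: Rmult_le_compat_l; lra.
have : A * Rabs (T s - T s0) <= A * (r / 2 / (A + 1)) by apply: Rmult_le_compat_l; lra.
have := shrink A0 (ltac:(lra) : 0 < r / 2); have := shrink B0 (ltac:(lra) : 0 < r / 2).
rewrite /A /B; lra.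
Qed.

Lemma curve_image_connected n (c : R -> vec n) a :
  (forall s0, Rabs s0 < a -> forall rho, 0 < rho -> exists del, 0 < del /\
     forall s, Rabs (s - s0) < del -> vnorm (vsub (c s) (c s0)) < rho) ->
  vconnected (fun z => exists s, Rabs s < a /\ z = c s).
Proof.
move=> Hc [U [V [oU [oV [cov [dis [[zu [[su [Hsu ->]] Uu]] [zv [[sv [Hsv ->]] Vv]]]]]]]]].
have inI : forall s, in_interval (Some (- a)) (Some a) s <-> Rabs s < a.
  by move=> s; rewrite /in_interval; split; [move=> H; apply: Rabs_def1; lra | move/Rabs_def2; lra].
have Cs : forall s, Rabs s < a -> exists s', Rabs s' < a /\ c s = c s' by move=> s Hs; exists s.
have nbhd : forall (P : vec n -> Prop) t, vopen P -> Rabs t < a -> P (c t) ->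
    exists e, 0 < e /\ forall s, Rabs (s - t) < e -> P (c s).
  move=> P t oP Ht Pt; have [r [Hr Hr']] := oP _ Pt; have [d [Hd Hd']] := Hc t Ht r Hr.
  by exists d; split => // s Hs; apply: Hr'; exact: Hd'.
have Uv : U (c sv).
  apply: (@interval_connected (Some (- a)) (Some a) (fun s => U (c s)) su) => //.
  - exact/inI.
  - move=> t /inI It Ut; have [e [He H]] := nbhd U t oU It Ut.
    by exists e; split => // s _; exact: H.
  - move=> t /inI It Ut; have Vt : V (c t) by case: (cov _ (Cs t It)).
    have [e [He H]] := nbhd V t oV It Vt.
    by exists e; split => // s /inI Is Hs Us; exact: (dis _ (Cs s Is) Us (H s Hs)).
  - exact/inI.
exact: (dis _ (Cs sv Hsv) Uv Vv).
Qed.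

(* Second derivatives: the Hessian form of a C^2 function is symmetric. *)

Definition second_diff {n} (f : vec n -> R) (x p q : vec n) (t : R) : R :=
  f (plane x p q t t) - f (plane x p q t 0) - f (plane x p q 0 t) + f (plane x p q 0 0).

(* The Hessian bilinear form p^T H(x) q, where [Hs i] is the gradient of the
   i-th partial derivative [G _ i] of f. *)
Definition hess {n} (Hs : 'I_n -> vec n -> vec n) (x p q : vec n) : R :=
  \big[Rplus/0]_(i < n) (p i * dot (Hs i x) q).

Lemma second_diff_sym n (f : vec n -> R) x p q t : second_diff f x p q t = second_diff f x q p t.
Proof.
have E : forall s u, plane x p q s u = plane x q p u s.
  by move=> s u; apply: functional_extensionality => k; rewrite /plane; ring.
by rewrite /second_diff !E; ring.
Qed.

Section SecondOrder.

Variables (n : nat) (f : vec n -> R) (G : vec n -> vec n) (Hs : 'I_n -> vec n -> vec n).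
Hypothesis HfG : forall x, has_grad f (G x) x.
Hypothesis HH : forall i, C1_with_grad (fun x => G x i) (Hs i).

Lemma hess_rows_cont x e : 0 < e -> exists del, 0 < del /\ forall y k q,
  vnorm (vsub y x) < del -> Rabs (dot (Hs k y) q - dot (Hs k x) q) <= l1norm q * e.
Proof.
move=> He.
have Hc : forall k, exists del, 0 < del /\ forall y, vnorm (vsub y x) < del ->
    vnorm (vsub (Hs k y) (Hs k x)) < e.
  by move=> k; exact: (proj2 (HH k) x e He).
have [d0 [Hd0 H0]] := uniform_delta Hc.
exists d0; split => // y k q Hy; apply: dot_diff_bound => i; apply: Rlt_le.
exact: Rle_lt_trans (coord_le_norm (vsub (Hs k y) (Hs k x)) i) (H0 k y Hy).
Qed.

Lemma second_diff_mvt x p q t : 0 < t -> exists s, 0 < s < t /\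
  second_diff f x p q t =
  t * \big[Rplus/0]_(k < n) (p k * (G (plane x p q s t) k - G (plane x p q s 0) k)).
Proof.
move=> t0.
pose g s := f (plane x p q s t) - f (plane x p q s 0).
pose g' s := dot (G (plane x p q s t)) p - dot (G (plane x p q s 0)) p.
have Hg : forall s, derivable_pt_lim g s (g' s).
  move=> s; apply: derivable_pt_lim_minus.
  - exact: (chain_rule (c := fun s => plane x p q s t) (HfG _) (fun k => deriv_plane_s x p q t s k)).
  - exact: (chain_rule (c := fun s => plane x p q s 0) (HfG _) (fun k => deriv_plane_s x p q 0 s k)).
have [s [Es Hs']] := MVT_cor2 g g' 0 t t0 (fun c _ => Hg c).
exists s; split => //; rewrite /second_diff; rewrite /g Rminus_0_r in Es.
have Eg : g' s = \big[Rplus/0]_(k < n) (p k * (G (plane x p q s t) k - G (plane x p q s 0) k)).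
  by rewrite /g' /dot -rsum_sub; apply: eq_bigr => k _; ring.
rewrite Eg in Es; lra.
Qed.

Lemma partial_mvt x p q s t k : 0 < t -> exists u, 0 < u < t /\
  G (plane x p q s t) k - G (plane x p q s 0) k = t * dot (Hs k (plane x p q s u)) q.
Proof.
move=> t0.
have Hh : forall u, derivable_pt_lim (fun u => G (plane x p q s u) k) u
    (dot (Hs k (plane x p q s u)) q).
  by move=> u; apply: (chain_rule (c := fun u => plane x p q s u) ((proj1 (HH k)) _))
    => j; exact: deriv_plane_t.
have [u [Eu Hu]] := MVT_cor2 _ _ 0 t t0 (fun c _ => Hh c).
by exists u; split => //; rewrite Eu Rminus_0_r Rmult_comm.
Qed.

Lemma second_diff_expansion x p q eps : 0 < eps -> exists del, 0 < del /\
  forall t, 0 < t < del ->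
    Rabs (second_diff f x p q t - t * t * hess Hs x p q) <= eps * (t * t).
Proof.
move=> Heps.
set Sp := l1norm p; set Sq := l1norm q.
have Sp0 : 0 <= Sp := l1norm_ge0 p; have Sq0 : 0 <= Sq := l1norm_ge0 q.
set e := eps / (Sp * Sq + 1).
have ep : 0 < e by apply: Rdiv_lt_0_compat => //; nra.
have [d0 [Hd0 H0]] := hess_rows_cont x ep.
set A := INR n * (Sp + Sq).
have A0 : 0 <= A by apply: Rmult_le_pos; [exact: pos_INR | lra].
exists (d0 / (A + 1)); split; first by apply: Rdiv_lt_0_compat => //; lra.
move=> t [t0 td].
have near : forall s u, 0 <= s <= t -> 0 <= u <= t -> vnorm (vsub (plane x p q s u) x) < d0.
  move=> s u Hs0 Hu; have := plane_near_base x p q Hs0 Hu.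
  have : A * t <= A * (d0 / (A + 1)) by apply: Rmult_le_compat_l; lra.
  by have := shrink A0 Hd0; rewrite /A -/Sp -/Sq; lra.
have [s [Hst ->]] := second_diff_mvt x p q t0.
have Hk : forall k, Rabs (p k * (G (plane x p q s t) k - G (plane x p q s 0) k)
                          - t * (p k * dot (Hs k x) q)) <= Rabs (p k) * (t * (Sq * e)).
  move=> k; have [u [Hu ->]] := partial_mvt x p q s k t0.
  have -> : p k * (t * dot (Hs k (plane x p q s u)) q) - t * (p k * dot (Hs k x) q) =
    p k * (t * (dot (Hs k (plane x p q s u)) q - dot (Hs k x) q)) by ring.
  rewrite !Rabs_mult (Rabs_right t); last lra.
  apply: Rmult_le_compat_l; first exact: Rabs_pos.
  by apply: Rmult_le_compat_l; [lra | apply: H0; apply: near; lra].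
have := weighted_sum_bound Hk; rewrite -/Sp => Hsum.
have -> : t * \big[Rplus/0]_(k < n) (p k * (G (plane x p q s t) k - G (plane x p q s 0) k))
          - t * t * hess Hs x p q =
  t * \big[Rplus/0]_(k < n) (p k * (G (plane x p q s t) k - G (plane x p q s 0) k)
                             - t * (p k * dot (Hs k x) q)).
  by rewrite rsum_sub rsum_scal /hess; ring.
rewrite Rabs_mult (Rabs_right t); last lra.
have : Sp * Sq * e <= eps by have := shrink (ltac:(nra) : 0 <= Sp * Sq) Heps; rewrite -/e; lra.
have : 0 <= t * (Sq * e) by apply: Rmult_le_pos; [lra | apply: Rmult_le_pos; lra].
nra.
Qed.

(* Schwarz's theorem: since second_diff is symmetric in p and q, so is its
   second-order term. *)
Lemma hess_sym x p q : hess Hs x p q = hess Hs x q p.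
Proof.
apply: NNPP => Hne.
set eps := Rabs (hess Hs x p q - hess Hs x q p) / 4.
have ep : 0 < eps by apply: Rdiv_lt_0_compat; [apply: Rabs_pos_lt; lra | lra].
have [d1 [Hd1 H1]] := second_diff_expansion x p q ep.
have [d2 [Hd2 H2]] := second_diff_expansion x q p ep.
have := Rmin_glb_lt _ _ _ Hd1 Hd2; have := Rmin_l d1 d2; have := Rmin_r d1 d2.
set t := Rmin d1 d2 / 2; move=> m2 m1 m0.
have A := H1 t ltac:(rewrite /t; lra).
have B := H2 t ltac:(rewrite /t; lra).
have tp : 0 < t by rewrite /t; lra.
rewrite second_diff_sym in A.
have C : Rabs ((t * t) * (hess Hs x p q - hess Hs x q p)) <= 2 * eps * (t * t).
  have := Rabs_triang (second_diff f x q p t - t * t * hess Hs x q p)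
                      (- (second_diff f x q p t - t * t * hess Hs x p q)).
  rewrite Rabs_Ropp.
  have -> : second_diff f x q p t - t * t * hess Hs x q p
            + - (second_diff f x q p t - t * t * hess Hs x p q) =
            t * t * (hess Hs x p q - hess Hs x q p) by ring.
  lra.
have tt : 0 < t * t by nra.
have D : 0 < Rabs (hess Hs x p q - hess Hs x q p) by apply: Rabs_pos_lt; lra.
rewrite Rabs_mult (Rabs_right (t * t)) /eps in C; nra.
Qed.

Lemma grad_field_cont x e : 0 < e -> exists rho, 0 < rho /\
  forall y, vnorm (vsub y x) < rho -> forall i, Rabs (G y i - G x i) < e.
Proof.
move=> He.
have Hi : forall i, exists del, 0 < del /\
    forall y, vnorm (vsub y x) < del -> Rabs (G y i - G x i) < e.
  by move=> i; exact: (grad_cont ((proj1 (HH i)) x) He).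
have [d [Hd H]] := uniform_delta Hi.
by exists d; split => // y Hy i; exact: H.
Qed.

Lemma transversal_box x w : 0 < dot (G x) (G x) -> exists sig0 tau0, 0 < sig0 /\ 0 < tau0 /\
  forall s t, Rabs s <= sig0 -> Rabs t <= tau0 -> 0 < dot (G (plane x w (G x) s t)) (G x).
Proof.
set u := G x => U2p.
have Su0 := l1norm_ge0 u.
set A := INR n * l1norm u; set B := INR n * l1norm w.
have A0 : 0 <= A by apply: Rmult_le_pos; [exact: pos_INR | exact: l1norm_ge0].
have B0 : 0 <= B by apply: Rmult_le_pos; [exact: pos_INR | exact: l1norm_ge0].
have [rho [Hrho Hr]] := grad_field_cont x
  (ltac:(apply: Rdiv_lt_0_compat; lra) : 0 < dot u u / 2 / (l1norm u + 1)).
exists (rho / 2 / (B + 1)), (rho / 2 / (A + 1)).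
split; first by apply: Rdiv_lt_0_compat; lra.
split; first by apply: Rdiv_lt_0_compat; lra.
move=> s t Hs0 Ht.
have Hn : vnorm (vsub (plane x w u s t) x) < rho.
  have := plane_dist x w u s t 0 0; rewrite plane00 !Rminus_0_r.
  have : B * Rabs s <= B * (rho / 2 / (B + 1)) by apply: Rmult_le_compat_l.
  have : A * Rabs t <= A * (rho / 2 / (A + 1)) by apply: Rmult_le_compat_l.
  have := shrink A0 (ltac:(lra) : 0 < rho / 2); have := shrink B0 (ltac:(lra) : 0 < rho / 2).
  rewrite /A /B; lra.
have := dot_diff_bound u (fun i => Rlt_le _ _ (Hr _ Hn i)).
have := shrink Su0 (ltac:(lra) : 0 < dot u u / 2).
by move=> H1 /Rabs_le_elim H2; rewrite /u in H1 H2 |- *; lra.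
Qed.

Lemma level_curve x w : 0 < dot (G x) (G x) -> exists sig1 (T : R -> R), 0 < sig1 /\
  (forall s, Rabs s < sig1 -> f (plane x w (G x) s (T s)) = f x) /\ T 0 = 0 /\
  (forall s0, Rabs s0 < sig1 -> forall eta, 0 < eta -> exists del, 0 < del /\
     forall s, Rabs (s - s0) < del -> Rabs (T s - T s0) < eta).
Proof.
move=> U2p; have [sig0 [tau0 [sp [tp Hpos]]]] := transversal_box w U2p.
set u := G x in Hpos *.
pose g s t := f (plane x w u s t) - f x.
have Hgt : forall s t, derivable_pt_lim (g s) t (dot (G (plane x w u s t)) u).
  move=> s t; rewrite -[dot _ u]Rminus_0_r.
  apply: derivable_pt_lim_minus (derivable_pt_lim_const _ _).
  exact: (chain_rule (c := fun t => plane x w u s t) (HfG _) (fun k => deriv_plane_t x w u s t k)).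
have Hgs : forall s t, derivable_pt_lim (fun s => g s t) s (dot (G (plane x w u s t)) w).
  move=> s t; rewrite -[dot _ w]Rminus_0_r.
  apply: derivable_pt_lim_minus (derivable_pt_lim_const _ _).
  exact: (chain_rule (c := fun s => plane x w u s t) (HfG _) (fun k => deriv_plane_s x w u t s k)).
have g_incr : forall s a b, Rabs s <= sig0 -> - tau0 <= a -> a < b -> b <= tau0 -> g s a < g s b.
  move=> s a b Hsb Ha Hab Hb.
  have [c [Ec Hc]] := MVT_cor2 (g s) _ a b Hab (fun c _ => Hgt s c).
  have := Hpos s c Hsb (Rabs_le _ _ (conj (ltac:(lra) : - tau0 <= c) (ltac:(lra) : c <= tau0))).
  by move=> H; have := Rmult_lt_0_compat _ _ H (ltac:(lra) : 0 < b - a); lra.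
have g_cont_s : forall s0 t, Rabs s0 <= sig0 -> forall e, 0 < e -> exists del, 0 < del /\
    forall s, Rabs (s - s0) < del -> Rabs (g s t - g s0 t) < e.
  by move=> s0 t _; exact: (deriv_cont (Hgs s0 t)).
have g_cont_t : forall s, continuity (g s).
  by move=> s t; exact: (derivable_continuous_pt _ _ (exist _ _ (Hgt s t))).
have g00 : g 0 0 = 0 by rewrite /g plane00; ring.
have [sig1 [T [s1p [HT [T0 Tc]]]]] := implicit_zero_curve tp g_incr g_cont_s g_cont_t g00 sp.
exists sig1, T; do 2 (split => //).
by move=> s Hsl; have := HT s Hsl; rewrite /g; lra.
Qed.

Hypothesis Hmet : forall x y,
  same_component (fun z => f z = f x) x y -> vnorm (G x) = vnorm (G y).

(* For a metric function, |grad f|^2 is constant along the level curve of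
   [level_curve]; differentiating at x gives grad f(x)^T H(x) w = 0 for every
   w orthogonal to grad f(x). *)
Lemma hess_grad_tangent x w : 0 < dot (G x) (G x) -> dot (G x) w = 0 -> hess Hs x (G x) w = 0.
Proof.
move=> U2p Hw.
have [sig1 [T [s1p [Hlev [T0 Tc]]]]] := level_curve w U2p.
set u := G x in U2p Hw Hlev *.
pose c s := plane x w u s (T s).
have c0 : c 0 = x by rewrite /c T0 plane00.
have Hconst : forall s, Rabs s < sig1 -> dot (G (c s)) (G (c s)) = dot (G (c 0)) (G (c 0)).
  move=> s Hsl.
  have Hsc : same_component (fun z => f z = f x) x (c s).
    exists (fun z => exists s, Rabs s < sig1 /\ z = c s); split.
      by apply: curve_image_connected => s0 Hs0; apply: plane_curve_cont; exact: Tc.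
    split; first by move=> z [s' [Hs' ->]]; exact: Hlev.
    by split; [exists 0; rewrite Rabs_R0 c0 | exists s].
  have := Hmet Hsc; rewrite /vnorm c0 => E.
  exact: (sqrt_inj _ _ (dot_ge0 _) (dot_ge0 _) (esym E)).
have TD : derivable_pt_lim T 0 0.
  by apply: (level_curve_tangent (HfG x) Hw U2p T0 s1p _ Hlev); apply: Tc; rewrite Rabs_R0.
have Hck : forall k, derivable_pt_lim (fun s => c s k) 0 (w k).
  move=> k; have := derivable_pt_lim_plus _ _ 0 _ _ (deriv_affine (x k) (w k) 0)
    (derivable_pt_lim_mult _ _ 0 _ _ TD (derivable_pt_lim_const (u k) 0)).
  rewrite /fct_cte T0 Rmult_0_l Rmult_0_r !Rplus_0_r.
  by apply: derivable_pt_lim_ext => s; rewrite /c /plane /plus_fct /mult_fct /fct_cte.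
have HGi : forall i, derivable_pt_lim (fun s => G (c s) i) 0 (dot (Hs i x) w).
  by move=> i; have := chain_rule ((proj1 (HH i)) (c 0)) Hck; rewrite c0.
have HN : derivable_pt_lim (fun s => dot (G (c s)) (G (c s))) 0
    (\big[Rplus/0]_(i < n) (dot (Hs i x) w * G x i + G x i * dot (Hs i x) w)).
  rewrite /dot; apply: (@deriv_sum _ _ (fun i s => G (c s) i * G (c s) i)) => i.
  have := derivable_pt_lim_mult _ _ 0 _ _ (HGi i) (HGi i); rewrite c0.
  by apply: derivable_pt_lim_ext.
have := uniqueness_limite _ _ _ _ HN (deriv_locally_const s1p Hconst).
have -> : \big[Rplus/0]_(i < n) (dot (Hs i x) w * G x i + G x i * dot (Hs i x) w) =
          2 * hess Hs x u w.
  by rewrite /hess -rsum_scal; apply: eq_bigr => i _; rewrite /u; ring.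
lra.
Qed.

Definition hess_size (x : vec n) : R :=
  \big[Rplus/0]_(i < n) \big[Rplus/0]_(k < n) Rabs (Hs i x k).

Lemma hess_size_ge0 x : 0 <= hess_size x.
Proof. by apply: rsum_ge0 => i; apply: rsum_ge0 => k; exact: Rabs_pos. Qed.

Lemma hess_quad_bound x (u : vec n) :
  Rabs (dot (fun i => dot (Hs i x) u) u) <= hess_size x * dot u u.
Proof.
apply: Rle_trans (rsum_abs _) _.
have -> : hess_size x * dot u u =
    \big[Rplus/0]_(i < n) \big[Rplus/0]_(k < n) (Rabs (Hs i x k) * dot u u).
  rewrite /hess_size Rmult_comm -rsum_scal; apply: eq_bigr => i _.
  by rewrite -rsum_scal; apply: eq_bigr => k _; ring.
apply: rsum_le => i.
have -> : dot (Hs i x) u * u i = \big[Rplus/0]_(k < n) (Hs i x k * (u k * u i)).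
  by rewrite /dot Rmult_comm -rsum_scal; apply: eq_bigr => k _; ring.
apply: Rle_trans (rsum_abs _) _; apply: rsum_le => k.
by rewrite Rabs_mult; apply: Rmult_le_compat_l; [exact: Rabs_pos | exact: coord_prod_le].
Qed.

(* With u = grad f(x) and a = H(x) u, the vector w = |u|^2 a - (a.u) u is
   orthogonal to u, so by [hess_grad_tangent] and [hess_sym] w.a = 0, whence
   w.w = 0. *)
Lemma hess_eigen x : exists mu, Rabs mu <= hess_size x /\
  forall i, dot (Hs i x) (G x) = mu * G x i.
Proof.
set u := G x; set a := fun j => dot (Hs j x) u.
have [U2p|U20] := Rle_lt_or_eq_dec _ _ (dot_ge0 u); last first.
  exists 0; split; first by rewrite Rabs_R0; exact: hess_size_ge0.
  move=> i; rewrite Rmult_0_l /dot; apply: big1 => k _.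
  by rewrite (dot_zero_coord k (esym U20)); ring.
set U2 := dot u u in U2p.
pose w j := U2 * a j + (- dot a u) * u j.
have Huw : dot u w = 0 by rewrite /w dot_lin (dot_comm u a) /U2; ring.
have Hwa : dot w a = 0.
  have := hess_grad_tangent U2p Huw; rewrite -/u hess_sym.
  by rewrite /hess /dot; under eq_bigr do rewrite -/(a _).
have Hww : dot w w = 0 by rewrite {2}/w dot_lin Hwa (dot_comm w u) Huw; ring.
exists (dot a u / U2); split.
  rewrite /Rdiv Rabs_mult Rabs_inv (Rabs_right U2); last lra.
  apply: (Rmult_le_reg_r U2) => //; rewrite Rmult_assoc Rinv_l; last lra.
  by rewrite Rmult_1_r; exact: hess_quad_bound.
move=> i; have := dot_zero_coord i Hww; rewrite /w -/(a i) => E.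
by apply: (Rmult_eq_reg_l U2); [rewrite /Rdiv; field_simplify; lra | lra].
Qed.

Lemma hess_size_local_bound (c : R -> vec n) t1 :
  (forall rho, 0 < rho -> exists del, 0 < del /\
     forall t, Rabs (t - t1) < del -> vnorm (vsub (c t) (c t1)) < rho) ->
  exists eta K, 0 < eta /\ 0 <= K /\ forall t, Rabs (t - t1) < eta -> hess_size (c t) <= K.
Proof.
move=> Hc.
have Hi : forall i, exists del, 0 < del /\ forall y, vnorm (vsub y (c t1)) < del ->
    vnorm (vsub (Hs i y) (Hs i (c t1))) < 1.
  by move=> i; exact: (proj2 (HH i) (c t1) 1 Rlt_0_1).
have [d1 [Hd1 H1]] := uniform_delta Hi.
have [d2 [Hd2 H2]] := Hc d1 Hd1.
exists d2, (\big[Rplus/0]_(i < n) \big[Rplus/0]_(k < n) (Rabs (Hs i (c t1) k) + 1)).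
split => //; split.
  by apply: rsum_ge0 => i; apply: rsum_ge0 => k; have := Rabs_pos (Hs i (c t1) k); lra.
move=> t Ht; apply: rsum_le => i; apply: rsum_le => k.
have := coord_le_norm (vsub (Hs i (c t)) (Hs i (c t1))) k.
have := H1 i _ (H2 t Ht); rewrite /vsub => A B.
have := Rabs_triang (Hs i (c t) k - Hs i (c t1) k) (Hs i (c t1) k).
have -> : Hs i (c t) k - Hs i (c t1) k + Hs i (c t1) k = Hs i (c t) k by ring.
lra.
Qed.

(* Along a gradient line of a metric function the gradient keeps its
   direction, since its derivative H G is a multiple of G. *)
Lemma gradient_direction_constant lo hi (gamma : R -> vec n) t0 j :
  is_gradient_line G lo hi gamma -> in_interval lo hi t0 ->
  forall t, in_interval lo hi t -> forall i,
    G (gamma t) i * G (gamma t0) j - G (gamma t) j * G (gamma t0) i = 0.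
Proof.
move=> Hgamma It0.
apply: (direction_preserved (u := fun t => G (gamma t)) (a := fun t i => dot (Hs i (gamma t)) (G (gamma t)))
                            (K := fun t => hess_size (gamma t)) j It0).
- by move=> t It i; exact: (chain_rule ((proj1 (HH i)) _) (Hgamma t It)).
- by move=> t It; exact: hess_eigen.
- by move=> t1 It1; exact: (hess_size_local_bound (curve_cont (Hgamma t1 It1))).
Qed.

End SecondOrder.

Unset Implicit Arguments.
Set Strict Implicit.

Theorem theorem1p14 (n : nat) (f : vec n -> R) (G : vec n -> vec n)
  (Hf : metric_function f G)
  (lo hi : option R) (Hlh : nonempty_interval lo hi)
  (gamma : R -> vec n) (Hgamma : is_gradient_line G lo hi gamma)
  (Hnonstat : exists t0, in_interval lo hi t0 /\ exists i : 'I_n, G (gamma t0) i <> 0) :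
  exists (p v : vec n), (exists i : 'I_n, v i <> 0) /\
    forall t, in_interval lo hi t -> exists s : R, forall i : 'I_n, gamma t i = p i + s * v i.
Proof.
case: Hf => [[HfG HHex] Hmet].
have [Hs HH] := choice _ HHex.
case: Hnonstat => t0 [It0 [j Hj]].
exists (gamma t0), (G (gamma t0)); split; first by exists j.
apply: (line_of_parallel_velocity Hj It0 Hgamma) => t It i.
exact: (gradient_direction_constant HfG HH Hmet j Hgamma It0 It).
Qed.
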